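(* Let $c\in(0,1]$ be a constant and consider $m_1\times m_2$ grid graphs with $m_1\ge m_2$. For a random MRPP instance with $n=c\,m_1m_2$ robots on the $m_1\times m_2$ grid, the minimum makespan over all feasible solutions is $m_1+m_2-o(m_1)$ with probability arbitrarily close to $1$ as $m_1\to\infty$; that is, there is a function $f(m_1)=o(m_1)$ such that the probability that the minimum makespan is at least $m_1+m_2-f(m_1)$ tends to $1$ as $m_1\to\infty$. *)

From HB Require Import structures.
From mathcomp Require Import all_boot all_order all_algebra.
From mathcomp Require Import boolp reals.
Set Implicit Arguments. Unset Strict Implicit. Unset Printing Implicit Defensive.
Import Order.TTheory GRing.Theory Num.Theory.
Local Open Scope ring_scope.

Definition gvert (m1 m2 : nat) : finType := ('I_m1 * 'I_m2)%type.

Definition grid_adj (m1 m2 : nat) (u v : gvert m1 m2) : bool :=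
  ((u.1 == v.1 :> nat) && ((u.2.+1 == v.2 :> nat) || (v.2.+1 == u.2 :> nat)))
  || ((u.2 == v.2 :> nat) && ((u.1.+1 == v.1 :> nat) || (v.1.+1 == u.1 :> nat))).

Definition config (n m1 m2 : nat) := {ffun 'I_n -> gvert m1 m2}.

(* an MRPP instance: (start configuration, goal configuration);
   it is valid when both configurations are injective *)
Definition instance (n m1 m2 : nat) := (config n m1 m2 * config n m1 m2)%type.
Definition valid_instance n m1 m2 (x : instance n m1 m2) : bool :=
  injectiveb x.1 && injectiveb x.2.

(* Rotations along cycles are
   allowed (robots may follow each other). *)
Definition feasible_solution n m1 m2 (s g : config n m1 m2) (T : nat)
    (P : nat -> config n m1 m2) : Prop :=
  [/\ P 0 = s, P T = g,
      (forall t, (t <= T)%N -> injective (P t)),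
      (forall t i, (t < T)%N -> P t.+1 i = P t i \/ grid_adj (P t i) (P t.+1 i))
    & (forall t i j, (t < T)%N -> i != j ->
         ~ (P t.+1 i = P t j /\ P t.+1 j = P t i))].

Definition min_makespan_ge (R : realType) n m1 m2 (s g : config n m1 m2)
    (b : R) : Prop :=
  forall T P, feasible_solution s g T P -> b <= T%:R.

(* probability of an event under the uniform distribution on valid
   instances (start and goal drawn independently and uniformly among
   injective configurations) *)
Definition prob_instance (R : realType) n m1 m2
    (E : instance n m1 m2 -> Prop) : R :=
  (#|[set x : instance n m1 m2 | valid_instance x && `[< E x >]]|%:R
   / #|[set x : instance n m1 m2 | valid_instance x]|%:R)%R.

Definition little_o_id (R : realType) (f : nat -> R) : Prop :=
  forall e : R, 0 < e -> exists M : nat, forall m, (M <= m)%N -> `|f m| <= e * m%:R.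
Arguments prob_instance {R n m1 m2} E.
Arguments min_makespan_ge {R n m1 m2} s g b.
Arguments little_o_id {R} f.

(* A robot that starts in the lower-left w x h corner of the grid and ends in the
   upper-right one needs at least m1 + m2 - 2 (w + h) steps, since a move raises the sum
   of its coordinates by at most one.  Take w = m1 / m1^(1/4) = o(m1) and h = min(w, m2),
   so that the corners have K = w h >> (m1 m2)^(2/3) cells.  Drawing the (start, goal)
   pairs robot by robot, each of the first min(n, K/2) robots finds at least K^2/4 of its
   at most N^2 free pairs (N = m1 m2) crossing between the corners, so no robot crosses
   with probability at most (1 - K^2/(4 N^2))^min(n, K/2) <= 1 / (1 + min(n, K/2) K^2/(4 N^2)),
   which tends to 0. *)

From HB Require Import structures.
From mathcomp Require Import all_boot all_order all_algebra.
From mathcomp Require Import boolp reals.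
From mathcomp Require Import zify ring lra.
Set Implicit Arguments. Unset Strict Implicit. Unset Printing Implicit Defensive.
Import Order.TTheory GRing.Theory Num.Theory.

Lemma sum_nat_indicator (X : finType) (P : pred X) :
  \sum_(x : X) (P x : nat) = #|[set x | P x]|.
Proof. by rewrite -sum1dep_card [RHS]big_mkcond. Qed.

Lemma card_tupleS (X : finType) n (P : pred (n.+1.-tuple X)) :
  #|[set t | P t]| = \sum_(t : n.-tuple X) #|[set x | P [tuple of x :: t]]|.
Proof.
rewrite -sum_nat_indicator.
rewrite (eq_bigr (fun t : n.-tuple X => \sum_x (P [tuple of x :: t] : nat))); last first.
  by move=> t _; rewrite sum_nat_indicator.
rewrite exchange_big pair_bigA /=.
rewrite (reindex (fun p : X * n.-tuple X => [tuple of p.1 :: p.2])) //=.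
exists (fun t : n.+1.-tuple X => (thead t, [tuple of behead t])).
  by move=> [x t] _; congr pair; apply: val_inj.
by move=> t _; rewrite [RHS]tuple_eta.
Qed.

Lemma card_notin_uniq (V : finType) (s : seq V) :
  uniq s -> #|~: [set a in s]| = #|V| - size s.
Proof. by move=> /card_uniqP s_size; rewrite cardsCs setCK cardsE s_size. Qed.

Lemma card_setD_seq (V : finType) (A : {set V}) (s : seq V) :
  #|A| - size s <= #|A :\: [set a in s]|.
Proof.
rewrite cardsD leq_sub2l // (leq_trans (subset_leq_card (subsetIr _ _))) //.
by rewrite cardsE card_size.
Qed.

Section PairTuples.
Variable V : finType.
Implicit Types (s : seq (V * V)) (p : V * V).

Definition pairs_uniq s := uniq (unzip1 s) && uniq (unzip2 s).

Definition avoids (A B : {set V}) s := ~~ has (fun p => (p.1 \in A) && (p.2 \in B)) s.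

Definition free_pairs s : {set V * V} :=
  setX (~: [set a in unzip1 s]) (~: [set b in unzip2 s]).

Lemma pairs_uniq_cons p s : pairs_uniq (p :: s) = (p \in free_pairs s) && pairs_uniq s.
Proof.
rewrite /pairs_uniq /free_pairs /= !inE.
by case: (p.1 \in _); case: (p.2 \in _); case: (uniq _); case: (uniq _).
Qed.

Lemma card_free_pairs s : pairs_uniq s -> #|free_pairs s| = (#|V| - size s) ^ 2.
Proof.
by case/andP=> u1 u2; rewrite cardsX !card_notin_uniq // !size_map mulnn.
Qed.

Definition count_uniq n := #|[set t : n.-tuple (V * V) | pairs_uniq t]|.

Lemma count_uniqS n : count_uniq n.+1 = count_uniq n * (#|V| - n) ^ 2.
Proof.
rewrite /count_uniq card_tupleS -sum1dep_card big_distrl /= [RHS]big_mkcond /=.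
apply: eq_bigr => t _.
have -> : [set p | pairs_uniq (p :: t)] = if pairs_uniq t then free_pairs t else set0.
  by apply/setP => p; rewrite inE pairs_uniq_cons; case: ifP; rewrite ?inE ?andbT ?andbF.
by case: ifP => [t_uniq|_]; rewrite ?cards0 // mul1n card_free_pairs // size_tuple.
Qed.

Lemma count_uniq_gt0 n : n <= #|V| -> 0 < count_uniq n.
Proof.
elim: n => [|n IHn] n_le.
  rewrite /count_uniq (_ : [set t | _] = setT) ?cardsT ?card_tuple //.
  by apply/setP => t; rewrite !inE tuple0.
by rewrite count_uniqS muln_gt0 IHn ?(ltnW n_le) // expn_gt0 subn_gt0 n_le.
Qed.

Variables A B : {set V}.

Definition crossing_free_pairs s : {set V * V} :=
  setX (A :\: [set a in unzip1 s]) (B :\: [set b in unzip2 s]).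

Lemma pairs_uniq_avoids_cons p s :
  pairs_uniq (p :: s) && avoids A B (p :: s) =
  (p \in free_pairs s :\: crossing_free_pairs s) && (pairs_uniq s && avoids A B s).
Proof.
rewrite /pairs_uniq /avoids /free_pairs /crossing_free_pairs /= !inE.
by case: (p.1 \in A); case: (p.2 \in B); case: (p.1 \in _); case: (p.2 \in _);
  case: (uniq _); case: (uniq _); case: (has _ _).
Qed.

Lemma card_free_noncrossing s : pairs_uniq s ->
  #|free_pairs s :\: crossing_free_pairs s|
    <= (#|V| - size s) ^ 2 - (#|A| - size s) * (#|B| - size s).
Proof.
move=> s_uniq; rewrite cardsDS ?card_free_pairs //; last first.
  by apply/subsetP => p; rewrite !inE => /andP[/andP[-> _] /andP[-> _]].
rewrite leq_sub2l // cardsX leq_mul //.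
  by rewrite -(size_map fst) card_setD_seq.
by rewrite -(size_map snd) card_setD_seq.
Qed.

Definition count_avoiding n :=
  #|[set t : n.-tuple (V * V) | pairs_uniq t && avoids A B t]|.

Lemma count_avoidingS n :
  count_avoiding n.+1 <=
    count_avoiding n * ((#|V| - n) ^ 2 - (#|A| - n) * (#|B| - n)).
Proof.
rewrite /count_avoiding card_tupleS -sum1dep_card big_distrl /=.
rewrite [X in _ <= X]big_mkcond /=.
apply: leq_sum => t _.
have -> : [set p | pairs_uniq (p :: t) && avoids A B (p :: t)] =
          if pairs_uniq t && avoids A B t then free_pairs t :\: crossing_free_pairs t else set0.
  apply/setP => p; rewrite inE pairs_uniq_avoids_cons.
  by case: ifP => _; rewrite ?andbT ?andbF ?inE.
case: ifP => [/andP[t_uniq _]|_]; rewrite ?cards0 // mul1n.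
by have := card_free_noncrossing t_uniq; rewrite size_tuple.
Qed.

End PairTuples.

Fixpoint trunc_root4 (m : nat) : nat :=
  if m is m'.+1 then
    let r := trunc_root4 m' in if r.+1 ^ 4 <= m'.+1 then r.+1 else r
  else 0.

Lemma trunc_root4P m : trunc_root4 m ^ 4 <= m < (trunc_root4 m).+1 ^ 4.
Proof.
elim: m => [|m /andP[r_le r_gt]] //=; case: ifP => [r1_le|/negbT]; last by rewrite -ltnNge; lia.
have : (trunc_root4 m).+1 ^ 4 < (trunc_root4 m).+2 ^ 4 by rewrite ltn_exp2r.
by rewrite r1_le; lia.
Qed.

Lemma trunc_root4_max k m : k ^ 4 <= m -> k <= trunc_root4 m.
Proof.
move=> km; rewrite leqNgt; apply/negP => r_lt.
have : (trunc_root4 m).+1 ^ 4 <= k ^ 4 by rewrite leq_exp2r.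
by case/andP: (trunc_root4P m) => _; lia.
Qed.

Definition corner_width m := m %/ trunc_root4 m.

Lemma corner_width_cube_ge C m : (8 * C + 2) ^ 4 <= m -> C * m ^ 2 <= corner_width m ^ 3.
Proof.
move=> Cm; rewrite /corner_width; set d := trunc_root4 m; set w := m %/ d.
have d_ge : 8 * C + 2 <= d by apply: trunc_root4_max.
have d4_le : d ^ 4 <= m by case/andP: (trunc_root4P m).
have d_gt0 : 0 < d by lia.
have m_lt : m < w.+1 * d by apply: ltn_ceil.
have w_gt0 : 0 < w.
  by rewrite divn_gt0 // (leq_trans _ d4_le) // -{1}(expn1 d) leq_pexp2l.
have m_le : m <= 2 * (w * d) by nia.
have m3_le : m ^ 3 <= d ^ 3 * (8 * w ^ 3).
  apply: leq_trans (_ : (2 * (w * d)) ^ 3 <= _); first by rewrite leq_exp2r.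
  by apply: eq_leq; ring.
have m3_ge : d ^ 3 * (8 * (C * m ^ 2)) <= m ^ 3.
  have -> : d ^ 3 * (8 * (C * m ^ 2)) = d ^ 3 * (8 * C) * m ^ 2 by ring.
  rewrite [m ^ 3]expnS leq_mul //; apply: leq_trans d4_le.
  by rewrite [d ^ 4]expnSr leq_mul //; lia.
have d3_gt0 : 0 < d ^ 3 by rewrite expn_gt0 d_gt0.
rewrite -(leq_pmul2l d3_gt0) -(leq_pmul2l (isT : 0 < 8)) mulnCA.
by apply: leq_trans m3_ge (leq_trans m3_le _); rewrite mulnCA.
Qed.

Lemma corner_area_cube_ge C m1 m2 w :
  C * m1 ^ 2 <= w ^ 3 -> m2 <= m1 -> C * (m1 * m2) ^ 2 <= (w * minn w m2) ^ 3.
Proof.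
move=> Cw m21; have [->|C_gt0] := posnP C; first by rewrite mul0n.
have Cm21 : C * m1 ^ 2 * m2 ^ 2 <= w ^ 3 * m2 ^ 2 by rewrite leq_mul.
rewrite expnMn mulnA expnMn.
case: (leqP w m2) => [wm2 | m2w].
  apply: leq_trans Cm21 _; rewrite leq_mul //; apply: leq_trans Cw.
  by apply: leq_trans (leq_pmull _ C_gt0); rewrite leq_exp2r.
have [->|m2_gt0] := posnP m2; first by rewrite !exp0n // !muln0.
by apply: leq_trans Cm21 _; rewrite leq_mul // leq_pexp2l.
Qed.

Lemma four_mul_sq_le_minn L c N K n :
  16 * L * c * N ^ 2 <= K ^ 3 -> K <= N -> c <= N -> N < c * n.+1 ->
  4 * L * N ^ 2 <= minn n (K %/ 2) * K ^ 2.
Proof.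
move=> LK KN cN Nn; have [->|L_gt0] := posnP L; first by rewrite muln0 mul0n.
have c_gt0 : 0 < c by nia.
have n_gt0 : 0 < n by nia.
have N_gt0 : 0 < N by lia.
have K3 : K ^ 3 = K * K ^ 2 by rewrite expnS.
case: (leqP n (K %/ 2)) => [nK | Kn].
  have KK : 16 * L * c * N <= K ^ 2.
    have e : 16 * L * c * N ^ 2 = N * (16 * L * c * N) by ring.
    by rewrite e in LK; rewrite -(leq_pmul2l N_gt0) (leq_trans LK) // K3 leq_mul.
  have : c * (16 * (L * N ^ 2)) <= c * (2 * (n * K ^ 2)).
    have -> : c * (16 * (L * N ^ 2)) = 16 * L * c * N * N by ring.
    apply: leq_trans (leq_mul KK (ltnW Nn)) _.
    have -> : c * (2 * (n * K ^ 2)) = K ^ 2 * (c * (2 * n)) by ring.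
    by rewrite leq_mul // leq_mul //; lia.
  by rewrite leq_pmul2l //; lia.
have K_ge2 : 2 <= K.
  rewrite leqNgt; apply/negP => K_lt2.
  have : K ^ 3 <= 1 by rewrite (_ : 1 = 1 ^ 3) // leq_exp2r; lia.
  have : 0 < L * c * N ^ 2 by rewrite !muln_gt0 L_gt0 c_gt0 ?expn_gt0 N_gt0.
  by lia.
have : 4 * (4 * L * N ^ 2) <= 4 * (K %/ 2 * K ^ 2).
  apply: leq_trans (leq_trans (_ : _ <= 16 * L * c * N ^ 2) LK) _.
    have -> : 4 * (4 * L * N ^ 2) = 16 * L * 1 * N ^ 2 by ring.
    by rewrite !leq_mul.
  by rewrite K3 mulnA leq_mul //; have := leq_divM K 2; lia.
by rewrite leq_pmul2l.
Qed.

Lemma feasible_coord_sum_le n m1 m2 (s g : config n m1 m2) T P i :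
  feasible_solution s g T P -> (g i).1 + (g i).2 <= (s i).1 + (s i).2 + T.
Proof.
case=> P0 PT _ P_step _; rewrite -PT.
suff /(_ T (leqnn T)) : forall t, t <= T ->
  (P t i).1 + (P t i).2 <= (s i).1 + (s i).2 + t by [].
elim=> [|t IHt] tT; first by rewrite P0 addn0.
have := IHt (ltnW tT).
case: (P_step t i tT) => [-> | ]; first lia.
by case/orP => /andP[/eqP ? /orP[/eqP ? | /eqP ?]]; lia.
Qed.

Section Corners.
Variables m1 m2 w h : nat.

Definition corner_lo : {set gvert m1 m2} :=
  [set v : gvert m1 m2 | (v.1 < w) && (v.2 < h)].
Definition corner_hi : {set gvert m1 m2} :=
  [set v : gvert m1 m2 | (m1 - w <= v.1) && (m2 - h <= v.2)].

Lemma card_corner_lo : w <= m1 -> h <= m2 -> w * h <= #|corner_lo|.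
Proof.
move=> wm1 hm2.
pose embed (p : 'I_w * 'I_h) : gvert m1 m2 := (widen_ord wm1 p.1, widen_ord hm2 p.2).
have embed_inj : injective embed by move=> [a b] [a' b'] [/val_inj -> /val_inj ->].
have := card_imset [set: 'I_w * 'I_h] embed_inj.
rewrite cardsT card_prod !card_ord => <-; rewrite subset_leq_card //.
by apply/subsetP => _ /imsetP[[a b] _ ->]; rewrite inE /= !ltn_ord.
Qed.

Lemma card_corner_lo_le_hi : #|corner_lo| <= #|corner_hi|.
Proof.
pose reflect (v : gvert m1 m2) : gvert m1 m2 := (rev_ord v.1, rev_ord v.2).
have reflect_inj : injective reflect.
  by apply: inv_inj => -[a b]; rewrite /reflect /= !rev_ordK.
rewrite -(card_imset _ reflect_inj) subset_leq_card //.
apply/subsetP => _ /imsetP[[a b] + ->]; rewrite !inE /= => /andP[aw bh].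
by have := ltn_ord a; have := ltn_ord b; lia.
Qed.

End Corners.

Local Open Scope ring_scope.

Lemma noncrossing_fraction_le (R : realFieldType) (N a b K k : nat) :
  (K <= a <= N)%N -> (K <= b <= N)%N -> (k < K %/ 2)%N ->
  (((N - k) ^ 2 - (a - k) * (b - k))%:R : R)
    <= (1 - (K ^ 2)%:R / (4 * N ^ 2)%:R) * ((N - k) ^ 2)%:R.
Proof.
move=> /andP[Ka aN] /andP[Kb bN] kK.
have N_gt0 : (0 < N)%N by lia.
have K2_le : (K ^ 2 <= 4 * ((a - k) * (b - k)))%N.
  rewrite -mulnn (_ : 4 = 2 * 2)%N // mulnACA leq_mul //; lia.
have ab_le : ((a - k) * (b - k) <= (N - k) ^ 2)%N by rewrite -mulnn leq_mul //; lia.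
have Nk_le : ((N - k) ^ 2 <= N ^ 2)%N by rewrite leq_exp2r // leq_subr.
rewrite natrB // mulrBl mul1r lerD2l lerN2 mulrAC.
rewrite ler_pdivrMr ?ltr0n ?muln_gt0 ?expn_gt0 ?N_gt0 // -!natrM ler_nat.
by rewrite mulnCA mulnA leq_mul.
Qed.

Lemma sqr_div_4sqr_le1 (R : realFieldType) (K N : nat) :
  (K <= N)%N -> (K ^ 2)%:R / (4 * N ^ 2)%:R <= 1 :> R.
Proof.
move=> KN; have [->|N_gt0] := posnP N.
  by rewrite (_ : (4 * 0 ^ 2)%N = 0%N) // invr0 mulr0.
rewrite ler_pdivrMr ?ltr0n ?muln_gt0 ?expn_gt0 ?N_gt0 // mul1r ler_nat.
by rewrite -!mulnn -[4%N]/(2 * 2)%N mulnACA; apply: leq_mul; lia.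
Qed.

Lemma count_avoiding_le_uniq (V : finType) (A B : {set V}) n :
  (count_avoiding A B n <= count_uniq V n)%N.
Proof. by apply: subset_leq_card; apply/subsetP => t; rewrite !inE => /andP[]. Qed.

Lemma count_avoiding_le (R : realFieldType) (V : finType) (A B : {set V}) K n :
  (K <= #|A|)%N -> (K <= #|B|)%N ->
  ((count_avoiding A B n)%:R : R)
    <= (1 - (K ^ 2)%:R / (4 * #|V| ^ 2)%:R) ^+ minn n (K %/ 2) * (count_uniq V n)%:R.
Proof.
move=> KA KB; set q := _ / _.
have KAV : (K <= #|A| <= #|V|)%N by rewrite KA max_card.
have KBV : (K <= #|B| <= #|V|)%N by rewrite KB max_card.
have q'_ge0 : 0 <= 1 - q by rewrite subr_ge0 sqr_div_4sqr_le1 // (leq_trans KA) ?max_card.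
elim: n => [|n IHn]; first by rewrite min0n expr0 mul1r ler_nat count_avoiding_le_uniq.
have := count_avoidingS A B n; rewrite -(ler_nat R) natrM count_uniqS natrM.
move/le_trans; apply.
case: (ltnP n (K %/ 2)) => nK.
  have -> : minn n.+1 (K %/ 2) = (minn n (K %/ 2)).+1 by lia.
  rewrite [X in _ <= X](_ : _ = (1 - q) ^+ minn n (K %/ 2) * (count_uniq V n)%:R
                               * ((1 - q) * ((#|V| - n) ^ 2)%:R)); last by rewrite exprS; ring.
  by rewrite ler_pM // noncrossing_fraction_le.
have -> : minn n.+1 (K %/ 2) = minn n (K %/ 2) by lia.
by rewrite mulrA ler_pM // ler_nat leq_subr.
Qed.

Lemma bernoulli_expr (R : numDomainType) (q : R) k :
  0 <= q -> q <= 1 -> (1 - q) ^+ k * (1 + k%:R * q) <= 1.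
Proof.
move=> q_ge0 q_le1; elim: k => [|k IHk]; first by rewrite expr0 mul0r addr0 mulr1.
apply: le_trans IHk; rewrite -subr_ge0.
have -> : (1 - q) ^+ k * (1 + k%:R * q) - (1 - q) ^+ k.+1 * (1 + k.+1%:R * q)
          = (1 - q) ^+ k * (q * q * k.+1%:R) by rewrite exprS -natr1; ring.
by rewrite !mulr_ge0 // exprn_ge0 // subr_ge0.
Qed.

Lemma count_avoiding_ratio (R : realFieldType) (V : finType) (A B : {set V}) K L n :
  (0 < #|V|)%N -> (n <= #|V|)%N -> (K <= #|A|)%N -> (K <= #|B|)%N ->
  (4 * L * #|V| ^ 2 <= minn n (K %/ 2) * K ^ 2)%N ->
  (count_avoiding A B n)%:R / (count_uniq V n)%:R <= (1 + L%:R)^-1 :> R.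
Proof.
move=> V_gt0 nV KA KB LK.
set m := minn n (K %/ 2); set q : R := (K ^ 2)%:R / (4 * #|V| ^ 2)%:R.
have N2_gt0 : (0 : R) < (4 * #|V| ^ 2)%:R by rewrite ltr0n muln_gt0 expn_gt0 V_gt0.
have U_gt0 : (0 : R) < (count_uniq V n)%:R by rewrite ltr0n count_uniq_gt0.
have q_ge0 : 0 <= q by rewrite divr_ge0 // ltW.
have q_le1 : q <= 1 by rewrite sqr_div_4sqr_le1 // (leq_trans KA) ?max_card.
have L_le : (L%:R : R) <= m%:R * q.
  by rewrite mulrA ler_pdivlMr // -!natrM ler_nat mulnCA mulnA.
have G_le := @count_avoiding_le R V A B K n KA KB; rewrite -/q -/m in G_le.
rewrite ler_pdivrMr // ler_pdivlMl ?ltr_wpDr //.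
apply: le_trans (_ : (1 + m%:R * q) * ((1 - q) ^+ m * (count_uniq V n)%:R) <= _).
  by rewrite ler_pM ?addr_ge0 ?lerD2l.
by rewrite mulrA [_ * (1 - q) ^+ m]mulrC ler_piMl ?(ltW U_gt0) // bernoulli_expr.
Qed.

Section Instances.
Variables n m1 m2 : nat.
Implicit Types (x : instance n m1 m2) (A B : {set gvert m1 m2}).

Definition instance_pairs x : n.-tuple (gvert m1 m2 * gvert m1 m2) :=
  [tuple (x.1 i, x.2 i) | i < n].

Lemma instance_pairs_bij : bijective instance_pairs.
Proof.
exists (fun t => ([ffun i => (tnth t i).1], [ffun i => (tnth t i).2])).
  by move=> [s g]; congr pair; apply/ffunP => i; rewrite ffunE tnth_mktuple.
by move=> t; apply: eq_from_tnth => i; rewrite tnth_mktuple !ffunE -surjective_pairing.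
Qed.

Lemma card_instance_pairs (P : pred (n.-tuple (gvert m1 m2 * gvert m1 m2))) :
  #|[set x | P (instance_pairs x)]| = #|[set t | P t]|.
Proof.
rewrite -(on_card_preimset (onW_bij _ instance_pairs_bij)).
by apply: eq_card => x; rewrite !inE.
Qed.

Lemma valid_instance_pairs x : valid_instance x = pairs_uniq (instance_pairs x).
Proof.
rewrite /valid_instance /pairs_uniq /unzip1 /unzip2 /= -!map_comp.
by rewrite /injectiveb /dinjectiveb enumT.
Qed.

Definition crosses A B x : Prop := exists i, x.1 i \in A /\ x.2 i \in B.

Lemma crosses_instance_pairs A B x :
  `[< crosses A B x >] = ~~ avoids A B (instance_pairs x).
Proof.
rewrite /avoids negbK; apply/asboolP/hasP => [[i [Ai Bi]] | [p /mapP[i _ ->] /andP[Ai Bi]]].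
  by exists (x.1 i, x.2 i); [apply/mapP; exists i; rewrite ?mem_enum | rewrite Ai Bi].
by exists i.
Qed.

Lemma prob_crosses (R : realType) A B : (0 < count_uniq (gvert m1 m2) n)%N ->
  prob_instance (crosses A B)
    = 1 - (count_avoiding A B n)%:R / (count_uniq (gvert m1 m2) n)%:R :> R.
Proof.
move=> U_gt0.
have valid_card :
    #|[set x : instance n m1 m2 | valid_instance x]| = count_uniq (gvert m1 m2) n.
  rewrite /count_uniq -(card_instance_pairs (@pairs_uniq _)).
  by apply: eq_card => x; rewrite !inE valid_instance_pairs.
have crosses_card : #|[set x : instance n m1 m2 | valid_instance x && `[< crosses A B x >]]|
                    = (count_uniq (gvert m1 m2) n - count_avoiding A B n)%N.
  have -> : [set x : instance n m1 m2 | valid_instance x && `[< crosses A B x >]]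
            = [set x | pairs_uniq (instance_pairs x)]
              :\: [set x | pairs_uniq (instance_pairs x) && avoids A B (instance_pairs x)].
    apply/setP => x; rewrite !inE crosses_instance_pairs valid_instance_pairs.
    by case: (pairs_uniq _); case: (avoids _ _ _).
  rewrite cardsDS; last by apply/subsetP => x; rewrite !inE => /andP[].
  by rewrite (card_instance_pairs (@pairs_uniq _))
             (card_instance_pairs (fun t => pairs_uniq t && avoids A B t)).
rewrite /prob_instance crosses_card valid_card natrB ?count_avoiding_le_uniq //.
by rewrite mulrBl divff // pnatr_eq0 -lt0n.
Qed.

End Instances.

Lemma prob_instance_le (R : realType) n m1 m2 (E F : instance n m1 m2 -> Prop) :
  (forall x, E x -> F x) -> prob_instance E <= prob_instance F :> R.
Proof.
move=> EF; rewrite /prob_instance ler_wpM2r ?invr_ge0 // ler_nat subset_leq_card //.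
by apply/subsetP => x; rewrite !inE => /andP[-> /asboolP/EF/asboolP].
Qed.

Lemma min_makespan_ge_crosses (R : realType) n m1 m2 w h (x : instance n m1 m2) :
  (h <= w)%N -> crosses (corner_lo m1 m2 w h) (corner_hi m1 m2 w h) x ->
  min_makespan_ge x.1 x.2 ((m1 + m2)%:R - (4 * w)%:R : R).
Proof.
move=> hw [i []]; rewrite !inE => /andP[s1 s2] /andP[g1 g2] T P P_feasible.
have := feasible_coord_sum_le i P_feasible.
have := ltn_ord (x.2 i).1; have := ltn_ord (x.2 i).2.
rewrite lerBlDr -natrD ler_nat; lia.
Qed.

Lemma little_o_corner_width (R : realType) :
  little_o_id (fun m => (4 * corner_width m)%:R : R).
Proof.
move=> e e_gt0; exists ((Num.truncn (4 / e)).+1 ^ 4)%N => m /trunc_root4_max k_le.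
set k := (Num.truncn (4 / e)).+1 in k_le.
have k_gt : 4 < k%:R * e by rewrite -ltr_pdivrMr // truncnS_gt.
rewrite ger0_norm // natrM; apply: le_trans (_ : k%:R * e * (corner_width m)%:R <= _).
  exact/ler_wpM2r/ltW.
rewrite [k%:R * e]mulrC -mulrA; apply/(ler_wpM2l (ltW e_gt0)).
rewrite -natrM ler_nat (leq_trans _ (leq_divM m (trunc_root4 m))) //.
by rewrite mulnC leq_mul.
Qed.

Lemma truncn_mul_le (R : realType) (c : R) (N : nat) :
  0 <= c -> c <= 1 -> (Num.truncn (c * N%:R) <= N)%N.
Proof.
move=> c_ge0 c_le1; rewrite truncn_le_nat -natr1.
have : (0 : R) <= N%:R by [].
nra.
Qed.

Lemma lt_mul_truncn_mul (R : realType) (c : R) (N : nat) : 0 < c ->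
  (N < (Num.truncn c^-1).+1 * (Num.truncn (c * N%:R)).+1)%N.
Proof.
move=> c_gt0; rewrite -(ltr_nat R) natrM -{1}[N%:R](mulKf (lt0r_neq0 c_gt0)).
apply: lt_le_trans (_ : c^-1 * (Num.truncn (c * N%:R)).+1%:R <= _).
  by rewrite ltr_pM2l ?invr_gt0 // truncnS_gt.
by rewrite ler_pM2r ?ltr0n // ltW // truncnS_gt.
Qed.

Lemma crosses_corners_likely (R : realType) (c eps : R) :
  0 < c -> c <= 1 -> 0 < eps ->
  exists M : nat, forall m1 m2 : nat, (M <= m1)%N -> (0 < m2)%N -> (m2 <= m1)%N ->
    let w := corner_width m1 in
    1 - eps <= @prob_instance R (Num.truncn (c * (m1 * m2)%:R)) m1 m2
                 (crosses (corner_lo m1 m2 w (minn w m2)) (corner_hi m1 m2 w (minn w m2))).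
Proof.
move=> c_gt0 c_le1 eps_gt0.
(* [L] makes [(1 + L)^-1 <= eps], and [c'] makes [m1 * m2 < c' * n.+1]. *)
pose L := Num.truncn eps^-1; pose c' := (Num.truncn c^-1).+1.
exists ((8 * (16 * L * c') + 2 + c') ^ 4)%N => m1 m2 M_le m2_gt0 m21 /=.
set N := (m1 * m2)%N; set n := Num.truncn _; set w := corner_width m1.
set h := minn w m2; set K := (w * h)%N.
have m1_ge : ((8 * (16 * L * c') + 2) ^ 4 <= m1)%N.
  by apply: leq_trans M_le; rewrite leq_exp2r // leq_addr.
have c'_le : (c' <= N)%N.
  apply: leq_trans (leq_pmulr m1 m2_gt0); apply: leq_trans M_le.
  apply: leq_trans (leq_addl (8 * (16 * L * c') + 2) c') _.
  by rewrite -{1}[(_ + c')%N]expn1 leq_pexp2l // addn_gt0 addn_gt0 orbT.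
have K_cube := corner_area_cube_ge (corner_width_cube_ge m1_ge) m21.
have w_le : (w <= m1)%N := leq_div _ _.
have h_le : (h <= m2)%N := geq_minr _ _.
have KN : (K <= N)%N by rewrite leq_mul.
have budget := four_mul_sq_le_minn K_cube KN c'_le (lt_mul_truncn_mul N c_gt0).
have card_V : #|gvert m1 m2| = N by rewrite card_prod !card_ord.
have K_lo : (K <= #|corner_lo m1 m2 w h|)%N by apply: card_corner_lo.
have K_hi : (K <= #|corner_hi m1 m2 w h|)%N := leq_trans K_lo (card_corner_lo_le_hi _ _ _ _).
have n_le : (n <= #|gvert m1 m2|)%N by rewrite card_V truncn_mul_le // ltW.
rewrite prob_crosses ?count_uniq_gt0 // lerD2l lerN2.
apply: le_trans (@count_avoiding_ratio R _ _ _ K L n _ n_le K_lo K_hi _) _.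
- by rewrite card_V muln_gt0 m2_gt0 (leq_trans m2_gt0 m21).
- by rewrite card_V.
rewrite -[eps]invrK lef_pV2 ?posrE ?invr_gt0 ?ltr_wpDr // addrC natr1.
exact/ltW/truncnS_gt.
Qed.

Theorem mainTheorem2 (R : realType) (c : R) (hc0 : 0 < c) (hc1 : c <= 1) :
  exists f : nat -> R, little_o_id f /\
    forall eps : R, 0 < eps -> exists M : nat,
      forall m1 m2 : nat, (M <= m1)%N -> (0 < m2)%N -> (m2 <= m1)%N ->
        let n := Num.truncn (c * (m1 * m2)%:R) in
        1 - eps <= @prob_instance R n m1 m2
          (fun x : instance n m1 m2 =>
             min_makespan_ge x.1 x.2 ((m1 + m2)%:R - f m1)).
Proof.
exists (fun m => (4 * corner_width m)%:R); split; first exact: little_o_corner_width.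
move=> eps eps_gt0; have [M likely] := crosses_corners_likely hc0 hc1 eps_gt0.
exists M => m1 m2 M_le m2_gt0 m21 /=.
apply: le_trans (likely m1 m2 M_le m2_gt0 m21) _.
apply: prob_instance_le => x; exact: min_makespan_ge_crosses (geq_minl _ _).
Qed.
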